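(* Let $n\in\mathbb{N}$ and $i\in\mathbb{N}$ with $2\le i\le2^n$. Then there exists a maximal lattice-free polyhedron in $\mathbb{R}^n$ with exactly $i$ facets.
   Context: A set $B\subseteq\mathbb{R}^n$ is lattice-free if it is an $n$-dimensional closed convex set with $\operatorname{int}(B)\cap\mathbb{Z}^n=\emptyset$; it is maximal lattice-free if it is not a proper subset of another lattice-free set. *)

From HB Require Import structures.
From mathcomp Require Import all_boot all_order all_algebra.
From mathcomp Require Import all_classical all_reals all_analysis.
Set Implicit Arguments. Unset Strict Implicit. Unset Printing Implicit Defensive.
Import Order.TTheory GRing.Theory Num.Theory.
Import numFieldNormedType.Exports.
Local Open Scope classical_set_scope.
Local Open Scope ring_scope.

Section LatticeFree.
Variables (R : realType) (n : nat).
Implicit Types (B S F : set 'rV[R]_n) (x y c : 'rV[R]_n).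

Definition dotv (c x : 'rV[R]_n) : R := \sum_(j < n) c 0 j * x 0 j.

Definition lattice_point x : Prop := forall j : 'I_n, x 0 j \is a Num.int.

Definition convex_set B : Prop :=
  forall x y (t : R), B x -> B y -> 0 <= t <= 1 -> B (t *: x + (1 - t) *: y).

(* S contains k+1 affinely independent points x0, x0 + row 0 M, ..., x0 + row (k-1) M *)
Definition aff_indep_pts S (k : nat) : Prop :=
  exists x0, S x0 /\ exists M : 'M[R]_(k, n),
    (forall r : 'I_k, S (x0 + row r M)) /\ \rank M = k.

Definition affdim_eq S (d : nat) : Prop :=
  aff_indep_pts S d /\ ~ aff_indep_pts S d.+1.

Definition lattice_free B : Prop :=
  affdim_eq B n /\ closed B /\ convex_set B /\
  (forall x, (B°) x -> ~ lattice_point x).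

Definition maximal_lattice_free B : Prop :=
  lattice_free B /\
  (forall B', lattice_free B' -> B `<=` B' -> B = B').

Definition polyhedron B : Prop :=
  exists (m : nat) (a : 'I_m -> 'rV[R]_n) (b : 'I_m -> R),
    B = [set x | forall k, dotv (a k) x <= b k].

Definition face B F : Prop :=
  (exists x, F x) /\
  exists c (delta : R), (forall x, B x -> dotv c x <= delta) /\
    F = [set x | B x /\ dotv c x = delta].

Definition facet B F : Prop := face B F /\ affdim_eq F n.-1.

Definition num_facets_eq B (i : nat) : Prop :=
  exists fs : 'I_i -> set 'rV[R]_n,
    injective fs /\ (forall k, facet B (fs k)) /\
    (forall F, facet B F -> exists k, F = fs k).

End LatticeFree.

(* Split the vertex set {0,1}^n into i subcubes, each fixing at least one
   coordinate: starting from the whole cube, split a subcube along a free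
   coordinate, which exists as long as there are fewer than 2^n pieces.  Each
   subcube p yields an inequality that is valid on [0,1]^n, tight at the
   vertices of p and slack by at least 1 at the other vertices; B is the
   polyhedron they define.  An integer point x rounds to the vertex
   (x_j >= 1)_j, and the inequality of the subcube containing that vertex is
   tight or violated at x, so x is not interior to B.  The corner of each
   subcube is an integer point of B tight only for its own inequality: hence
   every inequality defines a facet, distinct ones define distinct facets, and
   any convex set containing B and a point beyond a facet has the corner of
   that facet in its interior, which gives maximality. *)

From Pilot Require Import Defs.
From HB Require Import structures.
From mathcomp Require Import all_boot all_order all_algebra.
From mathcomp Require Import all_classical all_reals all_analysis.
From mathcomp Require Import ring lra zify.
Set Implicit Arguments. Unset Strict Implicit. Unset Printing Implicit Defensive.
Import Order.TTheory GRing.Theory Num.Theory.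
Import numFieldNormedType.Exports.
Local Open Scope classical_set_scope.
Local Open Scope ring_scope.

Notation cube_vertex n := {ffun 'I_n -> bool}.
(* A face of the cube {0,1}^n: [Some b] fixes a coordinate to [b], [None]
   leaves it free. *)
Notation subcube n := {ffun 'I_n -> option bool}.

Section Subcubes.
Variable n : nat.
Implicit Types (p : subcube n) (v : cube_vertex n) (s : seq (subcube n)).

Definition in_subcube p v : bool :=
  [forall j, if p j is Some b then v j == b else true].

Definition subcube_corner p : cube_vertex n := [ffun j => p j == Some true].

Definition subcube_fix p j b : subcube n :=
  [ffun l => if l == j then Some b else p l].

Definition cube_partition s : Prop := forall v, count (in_subcube^~ v) s = 1%N.

Lemma in_subcube_corner p : in_subcube p (subcube_corner p).
Proof. by apply/forallP => j; rewrite ffunE; case: (p j) => [[]|]. Qed.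

Lemma in_subcube_fix p j b v : p j = None ->
  in_subcube (subcube_fix p j b) v = (v j == b) && in_subcube p v.
Proof.
move=> pj; apply/forallP/andP => [in_fix|[/eqP vj /forallP in_p] l].
  split; first by have := in_fix j; rewrite ffunE eqxx.
  apply/forallP => l; have := in_fix l; rewrite ffunE.
  by case: eqP => [->|]; rewrite ?pj.
by rewrite ffunE; case: eqP => [->|_]; [rewrite vj | exact: in_p].
Qed.

Lemma cube_partition_split s p j : cube_partition s -> p \in s -> p j = None ->
  cube_partition [:: subcube_fix p j true, subcube_fix p j false & rem p s].
Proof.
move=> part sp pj v; rewrite -(part v) (permP (perm_to_rem sp)) /=.
by rewrite !in_subcube_fix //; case: (v j).
Qed.

Lemma card_total_subcube p : (forall j, p j != None) ->
  #|[pred v | in_subcube p v]| = 1%N.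
Proof.
move=> total; apply: (@fintype.eq_card1 _ (subcube_corner p)) => v; rewrite !inE.
apply/idP/eqP => [/forallP vp|->]; last exact: in_subcube_corner.
apply/ffunP => j; rewrite ffunE; have := vp j.
by case: (p j) (total j) => // -[] _ /eqP ->.
Qed.

Lemma cube_partition_size_total s : cube_partition s ->
  (forall p j, p \in s -> p j != None) -> size s = (2 ^ n)%N.
Proof.
move=> part total.
have -> : (2 ^ n = \sum_(v : cube_vertex n) count (in_subcube^~ v) s)%N.
  by rewrite (eq_bigr (fun=> 1%N)) // sum_nat_const muln1 card_ffun card_bool card_ord.
under [RHS]eq_bigr => v _ do rewrite -sum1_count big_mkcond /=.
rewrite exchange_big -sum1_size; apply: eq_big_seq => p sp.
by rewrite -big_mkcond sum1_card card_total_subcube // => j; apply: total.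
Qed.

Lemma cube_partition_exists i : (0 < i <= 2 ^ n)%N ->
  exists s, size s = i /\ cube_partition s.
Proof.
elim: i => [//|[|i] IH /andP [_ lei]].
  exists [:: [ffun=> None]]; split => // v /=.
  suff -> : in_subcube [ffun=> None] v by [].
  by apply/forallP => j; rewrite ffunE.
have [s [size_s part]] := IH (ltnW lei).
have [p [j [sp pj]]] : exists p j, p \in s /\ p j = None.
  apply: contrapT => no_free.
  suff : size s = (2 ^ n)%N by rewrite size_s => eq_s; rewrite eq_s ltnn in lei.
  apply: cube_partition_size_total => // p l sp; apply/eqP => pl.
  by apply: no_free; exists p, l.
exists [:: subcube_fix p j true, subcube_fix p j false & rem p s].
by split; [rewrite /= size_rem // size_s | exact: cube_partition_split].
Qed.

Lemma cube_partition_proper s p : cube_partition s -> (1 < size s)%N ->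
  p \in s -> exists j, p j != None.
Proof.
move=> part size_s sp; apply: contrapT => no_fixed.
have p_full v : in_subcube p v.
  apply/forallP => j; case pj: (p j) => [b|//].
  by case: no_fixed; exists j; rewrite pj.
case rem_s: (rem p s) => [|q rest].
  by move: size_s (size_rem sp); rewrite rem_s /=; lia.
have := part (subcube_corner q).
by rewrite (permP (perm_to_rem sp)) rem_s /= p_full in_subcube_corner.
Qed.

Lemma subcube_partition_exists i : (2 <= i <= 2 ^ n)%N ->
  exists P : 'I_i -> subcube n,
    (forall k, exists j, P k j != None) /\
    (forall v, exists! k, in_subcube (P k) v).
Proof.
case/andP => i_ge2 i_le.
have [s [size_s part]] : exists s, size s = i /\ cube_partition s.
  by apply: cube_partition_exists; rewrite i_le (ltnW i_ge2).
exists (fun k => nth [ffun=> None] s k); split.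
  move=> k; apply: (cube_partition_proper part); rewrite ?size_s //.
  by rewrite mem_nth // size_s.
move=> v; have := part v.
rewrite -sum1_count big_mkcond (big_nth [ffun=> None]) size_s big_mkord /=.
move=> count1.
have [k vk] : exists k : 'I_i, in_subcube (nth [ffun=> None] s k) v.
  apply: contrapT => none; move: count1; rewrite big1 // => k _.
  by case: ifP => // vk; case: none; exists k.
exists k; split => // l vl; apply/eqP; apply: contraT => kl; move: count1.
by rewrite (bigD1 k) // (bigD1 l) 1?eq_sym //= vk vl.
Qed.

End Subcubes.

Section Dotv.
Variables (R : realType) (n : nat).
Implicit Types (c x y : 'rV[R]_n).

Lemma dotvD c x y : dotv c (x + y) = dotv c x + dotv c y.
Proof. by rewrite /dotv -big_split; apply: eq_bigr => j _; rewrite mxE mulrDr. Qed.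

Lemma dotvZ c t x : dotv c (t *: x) = t * dotv c x.
Proof. by rewrite /dotv mulr_sumr; apply: eq_bigr => j _; rewrite mxE mulrCA. Qed.

Lemma dotvB c x y : dotv c (x - y) = dotv c x - dotv c y.
Proof. by rewrite dotvD -scaleN1r dotvZ mulN1r. Qed.

Lemma dotv0l x : dotv 0 x = 0.
Proof. by rewrite /dotv big1 // => j _; rewrite mxE mul0r. Qed.

Lemma dotv_sum c (I : Type) (r : seq I) (F : I -> 'rV[R]_n) :
  dotv c (\sum_(k <- r) F k) = \sum_(k <- r) dotv c (F k).
Proof.
elim/big_rec2: _ => [|k y1 y2 _ <-]; last by rewrite dotvD.
by rewrite /dotv big1 // => j _; rewrite mxE mulr0.
Qed.

Lemma mulmx_tr_dotv m (M : 'M[R]_(m, n)) c r : (M *m c^T) r 0 = dotv c (row r M).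
Proof. by rewrite mxE /dotv; apply: eq_bigr => j _; rewrite !mxE mulrC. Qed.

Lemma dotvv_gt0 c : c != 0 -> 0 < dotv c c.
Proof.
case/rV0Pn => j cj; rewrite /dotv (bigD1 j) //= ltr_pwDl //.
  by rewrite -expr2 exprn_even_gt0.
by apply: sumr_ge0 => l _; rewrite -expr2 sqr_ge0.
Qed.

Lemma continuous_dotv c : continuous (dotv c).
Proof.
have -> : dotv c = \sum_(j < n) (fun x : 'rV[R]_n => c 0 j * x 0 j).
  by apply/funext => x; rewrite /dotv fct_sumE.
apply: (big_ind (fun f : 'rV[R]_n -> R => continuous f)) => [|f g fc gc x|j _ x].
- exact: (@cst_continuous _ _ (0 : R)).
- exact: (continuousD (fc x) (gc x)).
- apply: (@continuousM R _ (cst (c 0 j)) (fun y : 'rV[R]_n => y 0 j)).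
    exact: cst_continuous.
  exact: coord_continuous.
Qed.

End Dotv.

Section AffineDimension.
Variables (R : realType) (n : nat).
Implicit Types (S T : set 'rV[R]_n) (c x z : 'rV[R]_n).

Lemma near_dotv_lt (J : finType) (K : pred J) (c : J -> 'rV[R]_n) (beta : J -> R) z :
  (forall j, K j -> dotv (c j) z < beta j) ->
  \forall x \near z, forall j, K j -> dotv (c j) x < beta j.
Proof.
move=> lt_z.
apply: (@filter_forall _ _ (fun j x => K j -> dotv (c j) x < beta j) (nbhs z) _) => j.
case: (boolP (K j)) => Kj.
  have near_j := @continuous_dotv _ _ (c j) z _ (lt_nbhsl (lt_z j Kj)).
  exact: (filterS (fun x lt_x _ => lt_x) near_j).
by apply: nearW => x /negP.
Qed.

Lemma near0_rows S z m (M : 'M[R]_(m, n)) :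
  nbhs z S -> \forall t \near (0 : R), forall r, S (z + t *: row r M).
Proof.
move=> Sz.
apply: (@filter_forall _ _ (fun r t => S (z + t *: row r M)) (nbhs (0 : R)) _) => r.
have line_cont : {for 0, continuous (fun t : R => z + t *: row r M)}.
  apply: (@continuousD R _ _ (cst z) (fun t : R => t *: row r M)).
    exact: cst_continuous.
  exact: (@continuousZr_tmp R _ _ id).
by apply: line_cont; rewrite /= scale0r addr0.
Qed.

Lemma near0_gt0 (P : R -> Prop) : (\forall t \near 0, P t) -> exists2 t, 0 < t & P t.
Proof.
move=> /nbhs_ballP [e e_gt0 Pe]; exists (e / 2); first by rewrite divr_gt0.
apply: Pe; rewrite /ball /= sub0r normrN gtr0_norm ?divr_gt0 //.
by rewrite ltr_pdivrMr // ltr_pMr // ltr1n.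
Qed.

Lemma dotv_local_max_eq0 S z c :
  nbhs z S -> (forall x, S x -> dotv c x <= dotv c z) -> c = 0.
Proof.
move=> Sz le_z; apply/eqP; apply: contraT => c_neq0.
have [t t_gt0 /(_ 0) Szt] := near0_gt0 (near0_rows c Sz).
have := le_z _ Szt; rewrite row_id dotvD dotvZ gerDl.
by rewrite leNgt mulr_gt0 // dotvv_gt0.
Qed.

Lemma aff_indep_ptsS S T d : S `<=` T -> aff_indep_pts S d -> aff_indep_pts T d.
Proof.
move=> ST [z [Sz [M [SM rkM]]]]; exists z; split; first exact: ST.
by exists M; split => // r; apply: ST.
Qed.

Lemma aff_indep_near S z m (M : 'M[R]_(m, n)) : S z -> \rank M = m ->
  (\forall t \near 0, forall r, S (z + t *: row r M)) -> aff_indep_pts S m.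
Proof.
move=> Sz rkM /near0_gt0 [t t_gt0 SM]; exists z; split => //.
exists (t *: M); split.
  by move=> r; have -> : row r (t *: M) = t *: row r M by apply/rowP => j; rewrite !mxE.
by rewrite mxrank_scale_nz ?gt_eqF.
Qed.

Lemma aff_indep_nbhs S z : nbhs z S -> aff_indep_pts S n.
Proof.
move=> Sz; apply: (aff_indep_near (nbhs_singleton Sz) (mxrank1 _ _)).
exact: near0_rows.
Qed.

Lemma no_aff_indep_succ S : ~ aff_indep_pts S n.+1.
Proof. by move=> [z [_ [M [_ rkM]]]]; have := rank_leq_col M; rewrite rkM ltnn. Qed.

Lemma hyperplane_dir_orthogonal S c (gamma : R) z m (M : 'M[R]_(m, n)) :
  (forall x, S x -> dotv c x = gamma) -> S z -> (forall r, S (z + row r M)) ->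
  M *m c^T = 0.
Proof.
move=> Sc Sz SM; apply/matrixP => r j; rewrite (ord1 j) mulmx_tr_dotv mxE.
by apply: (@addrI _ gamma); rewrite -{1}(Sc _ Sz) -dotvD Sc ?addr0.
Qed.

Lemma rank_orthogonal_lt m (M : 'M[R]_(m, n)) c :
  c != 0 -> M *m c^T = 0 -> (\rank M < n)%N.
Proof.
move=> c_neq0 /mulmx0_rank_max; rewrite mxrank_tr rank_rV c_neq0.
by rewrite addn1.
Qed.

Lemma hyperplane_not_aff_indep S c (gamma : R) :
  c != 0 -> (forall x, S x -> dotv c x = gamma) -> ~ aff_indep_pts S n.
Proof.
move=> c_neq0 Sc [z [Sz [M [SM rkM]]]].
have := rank_orthogonal_lt c_neq0 (hyperplane_dir_orthogonal Sc Sz SM).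
by rewrite rkM ltnn.
Qed.

Lemma hyperplane_aff_span S c d (alpha gamma : R) q :
  c != 0 -> aff_indep_pts S n.-1 ->
  (forall x, S x -> dotv c x = alpha) -> (forall x, S x -> dotv d x = gamma) ->
  dotv c q = alpha -> dotv d q = gamma.
Proof.
move=> c_neq0 [z [Sz [M [SM rkM]]]] Sc Sd cq; apply: contrapT => dq.
have Md := hyperplane_dir_orthogonal Sd Sz SM.
have qz_notin : ~~ (q - z <= M)%MS.
  apply/negP => /submxP [D qzD].
  have : ((q - z) *m d^T) 0 0 = 0 by rewrite qzD -mulmxA Md mulmx0 mxE.
  by rewrite mulmx_tr_dotv row_id dotvB (Sd _ Sz) => /eqP; rewrite subr_eq0 => /eqP.
have Mc : col_mx M (q - z) *m c^T = 0.
  rewrite mul_col_mx (hyperplane_dir_orthogonal Sc Sz SM).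
  have -> : (q - z) *m c^T = 0.
    apply/rowP => j; rewrite (ord1 j) mulmx_tr_dotv row_id dotvB cq (Sc _ Sz).
    by rewrite subrr mxE.
  by rewrite col_mx0.
have := ltn_leqif (mxrank_leqif_sup (addsmxSl M (q - z))).
rewrite addsmx_sub submx_refl (negbTE qz_notin) addsmxE rkM /=.
by have := rank_orthogonal_lt c_neq0 Mc; lia.
Qed.

End AffineDimension.

Lemma convex_interior_segment (R : realType) (n : nat) (C : set 'rV[R]_n) w y (t : R) :
  Defs.convex_set C -> (C°) w -> C y -> 0 < t <= 1 -> (C°) (t *: w + (1 - t) *: y).
Proof.
move=> C_convex Cw Cy /andP [t_gt0 t_le1].
pose f u := t^-1 *: (u - (1 - t) *: y).
set z := t *: w + (1 - t) *: y.
have shift : {for z, continuous (fun u : 'rV[R]_n => u - (1 - t) *: y)}.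
  exact: (@continuousB R _ _ id (cst ((1 - t) *: y)) z (@cvg_id _ _)
    (@cst_continuous _ _ ((1 - t) *: y) z)).
have f_cont : {for z, continuous f} := continuousZl_tmp shift.
have fz : f z = w by rewrite /f /z addrK scalerA mulVf ?gt_eqF // scale1r.
have C_of_f u : C (f u) -> C u.
  move=> Cfu; have -> : u = t *: f u + (1 - t) *: y.
    by rewrite /f scalerA divff ?gt_eqF // scale1r subrK.
  by apply: (C_convex _ _ _ Cfu Cy); rewrite ltW.
move: Cw; rewrite -fz => /f_cont near_f; exact: (filterS C_of_f near_f).
Qed.

Section PolyhedralSet.
Variables (R : realType) (n : nat) (I : finType) (a : I -> 'rV[R]_n) (b : I -> R).

Definition polyhedral_set : set 'rV[R]_n := [set x | forall k, dotv (a k) x <= b k].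

Definition facet_of k : set 'rV[R]_n := [set x | polyhedral_set x /\ dotv (a k) x = b k].

Local Notation B := polyhedral_set.

Lemma polyhedral_set_closed : closed B.
Proof.
have -> : B = \bigcap_(k in [set: I]) (dotv (a k) @^-1` [set r | r <= b k]).
  by apply/seteqP; split => x /= Bx k; [move=> _ |]; apply: Bx.
apply: closed_bigI => k _; apply: preimage_closed; last exact: closed_le.
by move=> x _; apply: continuous_dotv.
Qed.

Lemma polyhedral_set_convex : Defs.convex_set B.
Proof.
move=> x y t Bx By /andP [t_ge0 t_le1] k; rewrite dotvD !dotvZ.
have := ler_wpM2l t_ge0 (Bx k).
have := ler_wpM2l (eqbRL (subr_ge0 _ _) t_le1) (By k).
lra.
Qed.

Lemma nbhs_polyhedral_set z : (forall k, dotv (a k) z < b k) -> nbhs z B.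
Proof.
move=> lt_z; apply: filterS (near_dotv_lt (K := predT) (fun k _ => lt_z k)).
by move=> x lt_x k; apply/ltW/lt_x.
Qed.

Lemma face_facet_of k z : B z -> dotv (a k) z = b k -> face B (facet_of k).
Proof.
by move=> Bz akz; split; [exists z | exists (a k), (b k); split => // x; apply].
Qed.

Lemma aff_indep_facet_of k z : a k != 0 -> B z -> dotv (a k) z = b k ->
  (forall j, j != k -> dotv (a j) z < b j) -> aff_indep_pts (facet_of k) n.-1.
Proof.
move=> ak_neq0 Bz akz lt_z; set K := kermx (a k)^T.
have <- : \rank K = n.-1 by rewrite mxrank_ker mxrank_tr rank_rV ak_neq0 subn1.
have orthK : row_base K *m (a k)^T = 0.
  by apply/eqP; rewrite -sub_kermx eq_row_base.
apply: (aff_indep_near (z := z) (M := row_base K)); first by [].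
  exact/eqP/row_base_free.
have := near0_rows (row_base K) (near_dotv_lt (K := fun j => j != k) lt_z).
apply: filterS => t lt_t r.
have akr : dotv (a k) (z + t *: row r (row_base K)) = b k.
  by rewrite dotvD dotvZ -mulmx_tr_dotv orthK mxE mulr0 addr0.
split => // j; have [->|jk] := eqVneq j k; first by rewrite akr.
exact/ltW/lt_t.
Qed.

Lemma facet_facet_of k z : a k != 0 -> B z -> dotv (a k) z = b k ->
  (forall j, j != k -> dotv (a j) z < b j) -> facet B (facet_of k).
Proof.
move=> ak_neq0 Bz akz lt_z; split; first exact: face_facet_of akz.
split; first exact: aff_indep_facet_of akz lt_z.
have n_gt0 : (0 < n)%N by case: n a ak_neq0 => // a0; rewrite thinmx0 eqxx.
rewrite prednK //; apply: (hyperplane_not_aff_indep ak_neq0) => x [].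
by move=> _ ->.
Qed.

Lemma face_sub_facet_of F : aff_indep_pts B n -> face B F -> ~ aff_indep_pts F n ->
  exists k, F `<=` facet_of k.
Proof.
move=> affB [[x1 Fx1] [c [d [c_le EF]]]] naffF; subst F; have [Bx1 cx1] := Fx1.
apply: contrapT => no_k.
have /choice [p p_strict] :
    forall k, exists x, (B x /\ dotv c x = d) /\ dotv (a k) x < b k.
  move=> k; apply: contrapT => no_p; apply: no_k; exists k => x [Bx cx].
  split => //; apply/eqP; rewrite eq_le Bx /= leNgt; apply/negP => lt_x.
  by apply: no_p; exists x.
(* The average of the [p k], written relative to [x1] so that it stays in the
   face when [I] is empty. *)
pose q := x1 + #|I|%:R^-1 *: \sum_k (p k - x1).
have cq : dotv c q = d.
  rewrite dotvD dotvZ dotv_sum big1 ?mulr0 ?addr0 // => k _.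
  by rewrite dotvB (p_strict k).1.2 cx1 subrr.
have q_strict j : dotv (a j) q < b j.
  have I_gt0 : (0 < #|I|)%N by apply/card_gt0P; exists j.
  rewrite dotvD dotvZ dotv_sum -ltrBrDl mulrC ltr_pdivrMr ?ltr0n //.
  rewrite mulr_natr -sumr_const (bigD1 j) //= [X in _ < X](bigD1 j) //=.
  rewrite ltr_leD ?dotvB ?ltrD2r //; first exact: (p_strict j).2.
  by apply: ler_sum => k _; rewrite dotvB lerD2r; apply: (p_strict k).1.1.
have c0 : c = 0.
  apply: (dotv_local_max_eq0 (nbhs_polyhedral_set q_strict)) => x Bx.
  by rewrite cq c_le.
apply: naffF; apply: aff_indep_ptsS affB => x Bx; split => //.
by rewrite -cq c0 !dotv0l.
Qed.

Lemma facet_eq_facet_of F : (0 < n)%N -> (forall k, a k != 0) ->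
  aff_indep_pts B n -> facet B F -> exists k, F = facet_of k.
Proof.
move=> n_gt0 a_neq0 affB [faceF [affF naffF]].
rewrite prednK // in naffF.
have [k Fk] := face_sub_facet_of affB faceF naffF.
exists k; apply/seteqP; split => // q [Bq akq].
move: faceF => [_ [c [d [_ EF]]]]; rewrite EF; split => //.
apply: (hyperplane_aff_span (a_neq0 k) affF _ _ akq) => x Fx; first by case: (Fk x Fx).
by move: Fx; rewrite EF => -[].
Qed.

Lemma interior_convex_polyhedral_set (C : set 'rV[R]_n) k y z :
  Defs.convex_set C -> B `<=` C -> C y -> b k < dotv (a k) y ->
  B z -> (forall j, j != k -> dotv (a j) z < b j) -> (C°) z.
Proof.
move=> C_convex BC Cy ak_y Bz lt_z.
(* Pushing [z] slightly away from [y] gives a point [w] strictly inside [B],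
   and [z] lies on the open segment from [y] to [w]. *)
have [e e_gt0 near_e] :=
  near0_gt0 (near0_rows (z - y) (near_dotv_lt (K := fun j => j != k) lt_z)).
set w := z + e *: (z - y).
have w_strict j : dotv (a j) w < b j.
  have [->|jk] := eqVneq j k; last by have := near_e ord0 j jk; rewrite row_id.
  rewrite dotvD dotvZ dotvB; have := Bz k; nra.
have -> : z = (1 + e)^-1 *: w + (1 - (1 + e)^-1) *: y.
  by apply/rowP => j; rewrite !mxE; field; lra.
apply: convex_interior_segment => //.
  exact: filterS BC (nbhs_polyhedral_set w_strict).
by rewrite invr_gt0 invf_le1; lra.
Qed.

End PolyhedralSet.

Section SubcubeInequality.
Variables (R : realType) (n : nat).
Implicit Types (p : subcube n) (v : cube_vertex n) (x : 'rV[R]_n).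

Definition sign_of (o : option bool) : R :=
  if o is Some b then (if b then 1 else -1) else 0.

Definition subcube_normal p : 'rV[R]_n := \row_j sign_of (p j).

Definition subcube_rhs p : R := \sum_j (p j == Some true)%:R.

Definition vertex_point v : 'rV[R]_n := \row_j (v j)%:R.

Definition round_vertex x : cube_vertex n := [ffun j => 1 <= x 0 j].

Lemma subcube_normal_neq0 p : (exists j, p j != None) -> subcube_normal p != 0.
Proof.
case=> j pj; apply/rV0Pn; exists j; rewrite mxE.
by case: (p j) pj => [[]|] //= _; rewrite ?oppr_eq0 oner_eq0.
Qed.

Lemma dotv_subcube_normal_vertex p v :
  dotv (subcube_normal p) (vertex_point v) =
  subcube_rhs p - \sum_j (~~ if p j is Some b then v j == b else true)%:R.
Proof.
rewrite /dotv /subcube_rhs -sumrB; apply: eq_bigr => j _; rewrite !mxE.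
by case: (p j) => [[]|]; case: (v j); rewrite /= ?mulr1n ?mulr0n; lra.
Qed.

Lemma dotv_subcube_normal_in p v : in_subcube p v ->
  dotv (subcube_normal p) (vertex_point v) = subcube_rhs p.
Proof.
move/forallP => pv; rewrite dotv_subcube_normal_vertex big1 ?subr0 // => j _.
by rewrite pv.
Qed.

Lemma dotv_subcube_normal_out p v : ~~ in_subcube p v ->
  dotv (subcube_normal p) (vertex_point v) <= subcube_rhs p - 1.
Proof.
rewrite negb_forall => /existsP [j pvj].
rewrite dotv_subcube_normal_vertex lerD2l lerN2 (bigD1 j) //= pvj lerDl.
by apply: sumr_ge0 => l _; rewrite ler0n.
Qed.

Lemma int_lt1_le0 (r : R) : r \is a Num.int -> r < 1 -> r <= 0.
Proof. by move=> /intrP [m ->]; rewrite ltrz1 lerz0 -[1%R]add0r ltzD1. Qed.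

Lemma lattice_point_subcube_normal p x : lattice_point x ->
  in_subcube p (round_vertex x) -> subcube_rhs p <= dotv (subcube_normal p) x.
Proof.
move=> x_int /forallP px; apply: ler_sum => j _; rewrite mxE.
have := px j; rewrite ffunE.
case: (p j) => [[]|] /=; rewrite ?mulr1n ?mulr0n ?mul0r // => /eqP.
  by rewrite mul1r.
by move/negbT; rewrite -ltNge => /(int_lt1_le0 (x_int j)); rewrite mulN1r oppr_ge0.
Qed.

Lemma subcube_normal_center p : (exists j, p j != None) ->
  dotv (subcube_normal p) (const_mx 2^-1) < subcube_rhs p.
Proof.
case=> j pj; rewrite /dotv /subcube_rhs (bigD1 j) //= [X in _ < X](bigD1 j) //=.
rewrite ltr_leD //.
- by rewrite !mxE; case: (p j) pj => [[]|] //= _; lra.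
- by apply: ler_sum => l _; rewrite !mxE; case: (p l) => [[]|] /=; lra.
Qed.

End SubcubeInequality.

Section SubcubePolyhedron.
Variables (R : realType) (n : nat) (I : finType) (P : I -> subcube n).
Hypothesis P_proper : forall k, exists j, P k j != None.
Hypothesis P_partition : forall v, exists! k, in_subcube (P k) v.

Let a k := subcube_normal R (P k).
Let b k := subcube_rhs R (P k).
Let B := polyhedral_set a b.
Let corner k := vertex_point R (subcube_corner (P k)).

Lemma corner_tight k : dotv (a k) (corner k) = b k.
Proof. exact/dotv_subcube_normal_in/in_subcube_corner. Qed.

Lemma corner_strict j k : j != k -> dotv (a j) (corner k) < b j.
Proof.
move=> jk; apply: (le_lt_trans (dotv_subcube_normal_out _ _)); last first.
  by rewrite ltrBlDr ltrDl ltr01.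
apply: contra jk => in_j; have [l [_ l_uniq]] := P_partition (subcube_corner (P k)).
by rewrite -(l_uniq j in_j) (l_uniq k (in_subcube_corner _)).
Qed.

Lemma corner_in k : B (corner k).
Proof.
move=> j; have [->|jk] := eqVneq j k; first by rewrite corner_tight.
exact/ltW/corner_strict.
Qed.

Lemma subcube_polyhedron_full : aff_indep_pts B n.
Proof.
apply: (aff_indep_nbhs (z := const_mx 2^-1)); apply: nbhs_polyhedral_set => k.
exact: subcube_normal_center.
Qed.

Lemma subcube_polyhedron_lattice_free : lattice_free B.
Proof.
split; first by split; [exact: subcube_polyhedron_full | exact: no_aff_indep_succ].
split; first exact: polyhedral_set_closed.
split; first exact: polyhedral_set_convex.
move=> x Bx_int x_int; have Bx := nbhs_singleton Bx_int.
have [k [in_k _]] := P_partition (round_vertex x).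
have akx : dotv (a k) x = b k.
  by apply/eqP; rewrite eq_le Bx lattice_point_subcube_normal.
have /eqP := subcube_normal_neq0 R (P_proper k); apply.
by apply: (dotv_local_max_eq0 Bx_int) => y By; rewrite akx; apply: By.
Qed.

Lemma subcube_polyhedron_maximal : maximal_lattice_free B.
Proof.
split => [|C [_ [_ [C_convex C_free]]] BC].
  exact: subcube_polyhedron_lattice_free.
apply/seteqP; split => // y Cy; apply: contrapT => By_not.
have [k ak_y] : exists k, b k < dotv (a k) y.
  apply: contrapT => all_le; apply: By_not => k; rewrite leNgt.
  by apply/negP => lt_k; apply: all_le; exists k.
apply: (C_free (corner k)); last by move=> j; rewrite mxE natr_int.
exact: interior_convex_polyhedral_set C_convex BC Cy ak_y (corner_in k)
  (fun j jk => corner_strict jk).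
Qed.

Lemma subcube_polyhedron_facet k : facet B (facet_of a b k).
Proof.
apply: (facet_facet_of (a := a) (b := b) _ (corner_in k) (corner_tight k)).
  exact: subcube_normal_neq0.
by move=> j; apply: corner_strict.
Qed.

Lemma facet_of_subcube_inj : injective (facet_of a b).
Proof.
move=> j k facet_jk; apply/eqP; apply: contraT => jk.
have [_ ajk] : facet_of a b j (corner k).
  by rewrite facet_jk; split; [exact: corner_in | exact: corner_tight].
by have := corner_strict jk; rewrite ajk ltxx.
Qed.

Lemma subcube_polyhedron_facets F : facet B F -> exists k, F = facet_of a b k.
Proof.
have [k _] := P_partition [ffun=> false]; have [j _] := P_proper k.
apply: facet_eq_facet_of; first exact: leq_ltn_trans (ltn_ord j).
  by move=> l; apply: subcube_normal_neq0.
exact: subcube_polyhedron_full.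
Qed.

End SubcubePolyhedron.

Theorem lemma3p3 (R : realType) (n i : nat) :
  (2 <= i)%N -> (i <= 2 ^ n)%N ->
  exists B : set 'rV[R]_n,
    polyhedron B /\ maximal_lattice_free B /\ num_facets_eq B i.
Proof.
move=> i_ge2 i_le.
have [|P [P_proper P_partition]] := @subcube_partition_exists n i.
  by rewrite i_ge2.
pose a k := subcube_normal R (P k); pose b k := subcube_rhs R (P k).
exists (polyhedral_set a b); split; first by exists i, a, b.
split; first exact: subcube_polyhedron_maximal.
exists (facet_of a b); split; first exact: facet_of_subcube_inj.
split; first exact: subcube_polyhedron_facet.
exact: subcube_polyhedron_facets.
Qed.
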